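(* Let $(\mathsf P,\mathcal O)$ be a semitopology and $p\in\mathsf P$. Then: (1) $p$ is regular if and only if $p$ is weakly regular and strongly compatible; (2) every point of $\mathsf P$ is regular if and only if every point of $\mathsf P$ is weakly regular and the semiframe $(\mathcal O,\subseteq,\between)$ is strongly compatible.
   Context: A semitopology is a pair $(\mathsf P,\mathcal O)$ where $\mathcal O\subseteq\mathcal P(\mathsf P)$ contains $\varnothing,\mathsf P$ and is closed under arbitrary unions. Write $O\between O'$ when $O\cap O'\neq\varnothing$. $T$ is topen when nonempty, open, and for all open $O,O'$, $O\between T\between O'$ implies $O\between O'$. Points are intertwined when every open containing one meets every open containing the other; $I(p)$ is the set of points intertwined with $p$; $K(p)$ is the union of all open subsets of $I(p)$. $p$ is regular when $p\in K(p)$ and $K(p)$ is topen; weakly regular when $p\in K(p)$. $\mathrm{nbhd}(p)=\{O\in\mathcal O\mid p\in O\}$. For $F\subseteq\mathcal O$, $F^\ast=\{O'\in\mathcal O\mid O'\between O\text{ for all }O\in F\}$; $F$ is strongly compatible when $F^\ast$ is nonempty and its elements pairwise intersect. A point $p$ is strongly compatible when $\mathrm{nbhd}(p)$ is strongly compatible. An abstract point of $(\mathcal O,\subseteq,\between)$ is a nonempty, up-closed (under $\subseteq$ within $\mathcal O$), pairwise-intersecting set $F\subseteq\mathcal O$ that is completely prime: if $\bigcup\mathcal Y\in F$ for $\mathcal Y\subseteq\mathcal O$ (possibly empty) then some element of $\mathcal Y$ is in $F$. The semiframe $(\mathcal O,\subseteq,\between)$ is strongly compatible when every abstract point of it is strongly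 compatible. *)

Definition pset (P : Type) := P -> Prop.

Definition subset {P : Type} (A B : pset P) : Prop := forall x, A x -> B x.

Definition between {P : Type} (A B : pset P) : Prop := exists x, A x /\ B x.

Definition bigunion {P : Type} (Y : pset P -> Prop) : pset P :=
  fun x => exists O, Y O /\ O x.

Record semitopology (P : Type) := {
  is_open : pset P -> Prop;
  open_empty : is_open (fun _ => False);
  open_full : is_open (fun _ => True);
  open_union : forall Y : pset P -> Prop,
      (forall O, Y O -> is_open O) -> is_open (bigunion Y)
}.
Arguments is_open {P} s _.

Section Defs.
Context {P : Type} (S : semitopology P).

Definition topen (T : pset P) : Prop :=
  (exists x, T x) /\ is_open S T /\
  forall O O', is_open S O -> is_open S O' ->
    between O T -> between T O' -> between O O'.

Definition intertwined (p q : P) : Prop :=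
  forall O O', is_open S O -> is_open S O' -> O p -> O' q -> between O O'.

Definition I_set (p : P) : pset P := fun q => intertwined p q.

Definition K_set (p : P) : pset P :=
  bigunion (fun O => is_open S O /\ subset O (I_set p)).

Definition regular (p : P) : Prop := K_set p p /\ topen (K_set p).

Definition weakly_regular (p : P) : Prop := K_set p p.

Definition nbhd (p : P) : pset P -> Prop := fun O => is_open S O /\ O p.

Definition star (F : pset P -> Prop) : pset P -> Prop :=
  fun O' => is_open S O' /\ forall O, F O -> between O' O.

Definition strongly_compatible (F : pset P -> Prop) : Prop :=
  (exists O, star F O) /\
  forall O O', star F O -> star F O' -> between O O'.

Definition strongly_compatible_point (p : P) : Prop :=
  strongly_compatible (nbhd p).

Definition abstract_point (F : pset P -> Prop) : Prop :=
  (forall O, F O -> is_open S O) /\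
  (exists O, F O) /\
  (forall O O', F O -> is_open S O' -> subset O O' -> F O') /\
  (forall O O', F O -> F O' -> between O O') /\
  (forall Y : pset P -> Prop, (forall O, Y O -> is_open S O) ->
      F (bigunion Y) -> exists O, Y O /\ F O).

Definition semiframe_strongly_compatible : Prop :=
  forall F, abstract_point F -> strongly_compatible F.

End Defs.


(* The proof
   rests on two observations.
   - Any family F of opens containing a topen set T that meets every member
     of F is strongly compatible: T itself lies in F*, and two members of F*
     both meet T, so topenness makes them meet each other.
   - Conversely every open set meeting K(p) meets every neighbourhood of p
     (points of K(p) are intertwined with p), i.e. lies in nbhd(p)*; so
     strong compatibility of p makes K(p) topen.  For part (2), nbhd(q) is always an abstract
   point, which yields the backward direction from part (1); and when every
   point is weakly regular, the sets K(q) cover P, so by complete primeness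
   every abstract point contains some K(q), which is topen when q is regular,
   and the first observation applies. *)

Lemma between_sym {P : Type} (A B : pset P) : between A B -> between B A.
Proof. intros [x [Ax Bx]]. exists x; split; assumption. Qed.

Section StrongCompatibility.
Context {P : Type} (S : semitopology P).

Lemma topen_strongly_compatible (F : pset P -> Prop) (T : pset P) :
  topen S T -> F T -> (forall O, F O -> between T O) ->
  strongly_compatible S F.
Proof.
  intros [_ [HT Htopen]] FT Hmeet. split.
  - exists T. split; assumption.
  - intros O O' [HO HOF] [HO' HO'F].
    apply Htopen; try assumption.
    + apply HOF; exact FT.
    + apply between_sym, HO'F; exact FT.
Qed.

Lemma K_open (p : P) : is_open S (K_set S p).
Proof. apply open_union. intros O [HO _]; exact HO. Qed.

Lemma meets_K_star_nbhd (p : P) (O : pset P) :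
  is_open S O -> between O (K_set S p) -> star S (nbhd S p) O.
Proof.
  intros HO [x [Ox [W [[_ HWI] Wx]]]]. split; [exact HO |].
  intros U [HU Up].
  apply between_sym; exact (HWI x Wx U O HU HO Up Ox).
Qed.

Theorem regular_iff_weakly_regular_strongly_compatible (p : P) :
  regular S p <-> weakly_regular S p /\ strongly_compatible_point S p.
Proof.
  split.
  - intros [Hp Htopen]. split; [exact Hp |].
    apply (topen_strongly_compatible _ (K_set S p)); [exact Htopen | |].
    + split; [apply K_open | exact Hp].
    + intros O [_ Op]. exists p; split; assumption.
  - intros [Hp [_ Hsc]]. split; [exact Hp |].
    split; [exists p; exact Hp |]. split; [apply K_open |].
    intros O O' HO HO' HOK HKO'.
    apply Hsc; apply meets_K_star_nbhd; try assumption.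
    apply between_sym; exact HKO'.
Qed.

Lemma nbhd_abstract_point (q : P) : abstract_point S (nbhd S q).
Proof.
  split; [intros O [HO _]; exact HO |].
  split; [exists (fun _ => True); split; [apply open_full | exact I] |].
  split; [intros O O' [_ Oq] HO' Hsub; split; [exact HO' | apply Hsub, Oq] |].
  split; [intros O O' [_ Oq] [_ O'q]; exists q; split; assumption |].
  intros Y HY [_ [O [YO Oq]]]. exists O. split; [exact YO |].
  split; [apply HY, YO | exact Oq].
Qed.

(* If every point is weakly regular, the sets K(q) cover P; hence, by
   up-closure and complete primeness, each abstract point contains one. *)
Lemma abstract_point_contains_K (F : pset P -> Prop) :
  (forall q, weakly_regular S q) -> abstract_point S F ->
  exists q, F (K_set S q).
Proof.
  intros Hw [_ [[O0 FO0] [Fup [_ Fprime]]]].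
  set (Ks := fun O => exists q, O = K_set S q).
  assert (HKs : forall O, Ks O -> is_open S O) by (intros O [q ->]; apply K_open).
  assert (Fcover : F (bigunion Ks)).
  { apply (Fup O0); [exact FO0 | apply open_union; exact HKs |].
    intros x _. exists (K_set S x). split; [exists x; reflexivity | apply Hw]. }
  destruct (Fprime Ks HKs Fcover) as [K [[q ->] FK]].
  exists q; exact FK.
Qed.

End StrongCompatibility.

Theorem corollary9p51 (P : Type) (S : semitopology P) (p : P) :
  (regular S p <-> weakly_regular S p /\ strongly_compatible_point S p) /\
  ((forall q, regular S q) <->
     (forall q, weakly_regular S q) /\ semiframe_strongly_compatible S).
Proof.
  split; [apply regular_iff_weakly_regular_strongly_compatible |]. split.
  - intros Hreg.
    assert (Hw : forall q, weakly_regular S q) by (intro q; apply Hreg).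
    split; [exact Hw |].
    intros F HF.
    destruct (abstract_point_contains_K S F Hw HF) as [q FK].
    destruct HF as [_ [_ [_ [Fint _]]]].
    apply (topen_strongly_compatible S F (K_set S q)); [apply Hreg | exact FK |].
    intros O FO; apply Fint; assumption.
  - intros [Hw Hsf] q.
    apply regular_iff_weakly_regular_strongly_compatible.
    split; [apply Hw |].
    apply Hsf, nbhd_abstract_point.
Qed.
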